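(* Let $U$ be an infinite uniquely $2$-divisible group, $\nu$ an involutory almost regular automorphism of $U$, and let $A$ be an infinite abelian subgroup of $U$ which is inverted by $\nu$ and maximal (with respect to inclusion) among abelian subgroups of $U$ inverted by $\nu$. Let $B$ be a finitely generated abelian subgroup of $U$ which is inverted by $\nu$. Then $A$ contains a subgroup $A_1$ of finite index such that $\langle A_1,B\rangle$ is abelian.
   Context: An automorphism $\nu$ is involutory if $\nu\ne\mathrm{id}$ and $\nu^2=\mathrm{id}$, and almost regular if $C_U(\nu)$ is finite. A group is uniquely $2$-divisible if every element has a unique square root. A subgroup is inverted by $\nu$ if $x^\nu=x^{-1}$ for all its elements $x$. *)

From Stdlib Require Import List.
Import ListNotations.
Set Implicit Arguments.

Record Group := {
  carrier :> Type;
  gmul : carrier -> carrier -> carrier;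
  ginv : carrier -> carrier;
  gone : carrier;
  gmulA : forall x y z, gmul x (gmul y z) = gmul (gmul x y) z;
  gmul1l : forall x, gmul gone x = x;
  gmul1r : forall x, gmul x gone = x;
  gmulVl : forall x, gmul (ginv x) x = gone;
  gmulVr : forall x, gmul x (ginv x) = gone
}.

Section Defs.
Variable U : Group.

Definition finite_set (S : U -> Prop) : Prop :=
  exists l : list U, forall x, S x -> In x l.

Definition infinite_set (S : U -> Prop) : Prop := ~ finite_set S.

Definition infinite_group : Prop := infinite_set (fun _ => True).

Definition subgroup (H : U -> Prop) : Prop :=
  H (gone U) /\
  (forall x y, H x -> H y -> H (gmul U x y)) /\
  (forall x, H x -> H (ginv U x)).

Definition subset (S T : U -> Prop) : Prop := forall x, S x -> T x.

Definition gen (S : U -> Prop) : U -> Prop :=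
  fun x => forall H, subgroup H -> subset S H -> H x.

Definition abelian (S : U -> Prop) : Prop :=
  forall x y, S x -> S y -> gmul U x y = gmul U y x.

Definition finitely_generated (H : U -> Prop) : Prop :=
  exists l : list U, forall x, H x <-> gen (fun y => In y l) x.

Definition finite_index (A1 A : U -> Prop) : Prop :=
  exists l : list U, (forall a, In a l -> A a) /\
    forall x, A x -> exists a, In a l /\ exists y, A1 y /\ x = gmul U a y.

Definition uniquely_2_divisible : Prop :=
  forall x : U, exists! y : U, gmul U y y = x.

Definition automorphism (nu : U -> U) : Prop :=
  (forall x y, nu (gmul U x y) = gmul U (nu x) (nu y)) /\
  (forall x y, nu x = nu y -> x = y) /\
  (forall y, exists x, nu x = y).

Definition involutory (nu : U -> U) : Prop :=
  (exists x, nu x <> x) /\ (forall x, nu (nu x) = x).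

Definition fixed_points (nu : U -> U) : U -> Prop := fun x => nu x = x.

Definition almost_regular (nu : U -> U) : Prop := finite_set (fixed_points nu).

Definition inverted_by (nu : U -> U) (S : U -> Prop) : Prop :=
  forall x, S x -> nu x = ginv U x.

Definition abelian_inverted_subgroup (nu : U -> U) (A : U -> Prop) : Prop :=
  subgroup A /\ abelian A /\ inverted_by nu A.

Definition maximal_abelian_inverted (nu : U -> U) (A : U -> Prop) : Prop :=
  abelian_inverted_subgroup nu A /\
  forall A', abelian_inverted_subgroup nu A' -> subset A A' -> subset A' A.

Definition union2 (S T : U -> Prop) : U -> Prop := fun x => S x \/ T x.

End Defs.
Arguments finite_set {U}.
Arguments infinite_set {U}.
Arguments subgroup {U}.
Arguments subset {U}.
Arguments gen {U}.
Arguments abelian {U}.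
Arguments finitely_generated {U}.
Arguments finite_index {U}.
Arguments automorphism {U}.
Arguments involutory {U}.
Arguments fixed_points {U}.
Arguments almost_regular {U}.
Arguments inverted_by {U}.
Arguments abelian_inverted_subgroup {U}.
Arguments maximal_abelian_inverted {U}.
Arguments union2 {U}.

(* Write x = i c with nu c = c and i inverted (take i the square root of
   x nu(x)^-1).  For an abelian subgroup H inverted by nu and an inverted b, the
   fixed part c of x b only takes the finitely many values in C_U(nu), and if
   x, y in H give the same c then x y^-1 commutes with c b, hence (applying nu)
   with c b^-1, hence with b^2, hence with b by unique 2-divisibility.  So the
   centralizer of b in H has finite index in H; intersecting over the finitely
   many generators of B gives A1, and A1 together with B generates an abelian
   group. *)

From Stdlib Require Import List Classical.
Import ListNotations.

Declare Scope group_scope.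
Notation "x * y" := (gmul _ x y) : group_scope.
Notation "x ^-1" := (ginv _ x) (at level 3, left associativity, format "x ^-1")
  : group_scope.
Open Scope group_scope.

Section GroupFacts.
Context {U : Group}.
Implicit Types x y z : U.

Lemma mulg_cancel_l x y z : x * y = x * z -> y = z.
Proof.
  intro E. rewrite <- (gmul1l U y), <- (gmul1l U z), <- (gmulVl U x), <- !gmulA, E.
  reflexivity.
Qed.

Lemma mulg_cancel_r x y z : y * x = z * x -> y = z.
Proof.
  intro E. rewrite <- (gmul1r U y), <- (gmul1r U z), <- (gmulVr U x), !gmulA, E.
  reflexivity.
Qed.

Lemma invg_unique x y : x * y = gone U -> y = x^-1.
Proof. intro E. apply (mulg_cancel_l x). rewrite E, gmulVr. reflexivity. Qed.

Lemma invgK x : x^-1^-1 = x.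
Proof. symmetry. apply invg_unique, gmulVl. Qed.

Lemma invgM x y : (x * y)^-1 = y^-1 * x^-1.
Proof.
  symmetry. apply invg_unique.
  rewrite <- !gmulA, (gmulA U y), gmulVr, gmul1l, gmulVr. reflexivity.
Qed.

Lemma mulKg x y : x^-1 * (x * y) = y.
Proof. rewrite gmulA, gmulVl, gmul1l. reflexivity. Qed.

Lemma mulgVK x y : x * y^-1 * y = x.
Proof. rewrite <- gmulA, gmulVl, gmul1r. reflexivity. Qed.

Definition commute x y : Prop := x * y = y * x.

Lemma commute_sym x y : commute x y -> commute y x.
Proof. unfold commute. auto. Qed.

Lemma commute_subgroup x : subgroup (commute x).
Proof.
  unfold commute. split; [|split].
  - rewrite gmul1l, gmul1r. reflexivity.
  - intros y z Ey Ez. rewrite gmulA, Ey, <- gmulA, Ez, gmulA. reflexivity.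
  - intros y E. apply (mulg_cancel_l y).
    rewrite gmulA, <- E, <- (gmulA U x), gmulVr, gmul1r, gmulA, gmulVr, gmul1l.
    reflexivity.
Qed.

Lemma commute_shared_relation a b c d :
  a * b = c * b * a * c -> d * a * b = c * b * (d * a) * c -> commute d (c * b).
Proof.
  intros Ea Eda. unfold commute. apply (mulg_cancel_r (a * c)).
  rewrite <- (gmulA U d a b), Ea, !gmulA in Eda. rewrite !gmulA. exact Eda.
Qed.

Lemma commute_invl x y : commute x y -> commute x^-1 y.
Proof. intro E. apply commute_sym, commute_subgroup, commute_sym, E. Qed.

Lemma gen_min (S H : U -> Prop) : subgroup H -> subset S H -> subset (gen S) H.
Proof. intros HH SH x Sx. exact (Sx H HH SH). Qed.

Lemma gen_abelian (S : U -> Prop) : abelian S -> abelian (gen S).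
Proof.
  intros Sab.
  assert (commute_gen : forall s x, S s -> gen S x -> commute s x).
  { intros s x Ss. apply gen_min; [apply commute_subgroup|].
    intros t St. exact (Sab s t Ss St). }
  intros x y Sx Sy. apply commute_sym. revert x Sx.
  apply gen_min; [apply commute_subgroup|].
  intros s Ss. apply commute_sym, commute_gen; assumption.
Qed.

Definition centralizer_in (H S : U -> Prop) : U -> Prop :=
  fun x => H x /\ forall s, S s -> commute x s.

Lemma centralizer_in_subgroup (H S : U -> Prop) :
  subgroup H -> subgroup (centralizer_in H S).
Proof.
  intros [H1 [HM HV]]. split; [|split].
  - split; [exact H1|]. intros s _. apply commute_sym, commute_subgroup.
  - intros x y [Hx Cx] [Hy Cy]. split; [auto|].
    intros s Ss. apply commute_sym, commute_subgroup; apply commute_sym; auto.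
  - intros x [Hx Cx]. split; [auto|].
    intros s Ss. apply commute_sym, commute_subgroup; apply commute_sym; auto.
Qed.

Lemma centralizer_in_gen (H S : U -> Prop) :
  subset (centralizer_in H S) (centralizer_in H (gen S)).
Proof.
  intros x [Hx Cx]. split; [exact Hx|].
  apply gen_min; [apply commute_subgroup | exact Cx].
Qed.

Lemma finite_index_refl (H : U -> Prop) : subgroup H -> finite_index H H.
Proof.
  intros [H1 _]. exists [gone U]. split.
  - intros a [<- | []]. exact H1.
  - intros x Hx. exists (gone U). split; [left; reflexivity|].
    exists x. split; [exact Hx | symmetry; apply gmul1l].
Qed.

Lemma finite_index_mono (K K' H : U -> Prop) :
  subset K K' -> finite_index K H -> finite_index K' H.
Proof.
  intros KK' [l [lH cover]]. exists l. split; [exact lH|].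
  intros x Hx. destruct (cover x Hx) as [a [la [y [Ky ->]]]].
  exists a. split; [exact la|]. exists y. auto.
Qed.

Lemma finite_index_trans (K H A : U -> Prop) :
  subgroup A -> subset H A -> finite_index K H -> finite_index H A ->
  finite_index K A.
Proof.
  intros [_ [AM _]] HA [l1 [l1H cover1]] [l2 [l2A cover2]].
  exists (flat_map (fun a => map (fun h => a * h) l1) l2). split.
  - intros z Hz. apply in_flat_map in Hz. destruct Hz as [a [la Hz]].
    apply in_map_iff in Hz. destruct Hz as [h [<- lh]]. auto.
  - intros x Ax. destruct (cover2 x Ax) as [a [la [y [Hy ->]]]].
    destruct (cover1 y Hy) as [h [lh [z [Kz ->]]]].
    exists (a * h). split.
    + apply in_flat_map. exists a. split; [exact la | apply in_map, lh].
    + exists z. split; [exact Kz | apply gmulA].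
Qed.

(* Coset representatives: one element of H for each label that occurs. *)
Lemma finite_index_of_labels {T : Type} (L : list T) (R : U -> T -> Prop)
    (K H : U -> Prop) :
  (forall x, H x -> exists t, In t L /\ R x t) ->
  (forall x y t, H x -> H y -> R x t -> R y t -> K (y^-1 * x)) ->
  finite_index K H.
Proof.
  intros labelled same_label.
  assert (cover : forall L', exists r, (forall a, In a r -> H a) /\
    forall x, H x -> (exists t, In t L' /\ R x t) ->
      exists a, In a r /\ exists y, K y /\ x = a * y).
  { induction L' as [|t L' [r [rH cover]]].
    - exists []. split; [intros a []|]. intros x _ [t [[] _]].
    - destruct (classic (exists x0, H x0 /\ R x0 t)) as [[x0 [Hx0 Rx0]] | none].
      + exists (x0 :: r). split; [intros a [<- | ra]; auto|].
        intros x Hx [t' [[<- | Lt'] Rx]].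
        * exists x0. split; [left; reflexivity|].
          exists (x0^-1 * x). split; [eauto | symmetry; rewrite gmulA, gmulVr; apply gmul1l].
        * destruct (cover x Hx (ex_intro _ t' (conj Lt' Rx))) as [a [ra Ea]].
          exists a. split; [right|]; assumption.
      + exists r. split; [exact rH|].
        intros x Hx [t' [[<- | Lt'] Rx]].
        * exfalso. eauto.
        * eauto. }
  destruct (cover L) as [r [rH covers]].
  exists r. split; [exact rH|]. intros x Hx. exact (covers x Hx (labelled x Hx)).
Qed.

End GroupFacts.

Section UniquelyTwoDivisible.
Context {U : Group}.
Hypothesis divisible : uniquely_2_divisible U.

Lemma square_inj (r s : U) : r * r = s * s -> r = s.
Proof.
  intro E. destruct (divisible (s * s)) as [y [_ uniq]].
  rewrite <- (uniq r E), <- (uniq s eq_refl). reflexivity.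
Qed.

Lemma commute_of_square (x y : U) : commute x (y * y) -> commute x y.
Proof.
  intro E. unfold commute. apply (mulg_cancel_r x^-1).
  rewrite <- (gmulA U y), gmulVr, gmul1r. apply square_inj.
  transitivity (x * (y * y) * x^-1).
  - rewrite <- !gmulA, (gmulA U x^-1), gmulVl, gmul1l. reflexivity.
  - rewrite E, <- gmulA, gmulVr, gmul1r. reflexivity.
Qed.

End UniquelyTwoDivisible.

Section Involution.
Context {U : Group}.
Variable nu : U -> U.
Hypothesis nu_aut : automorphism nu.
Hypothesis nuK : forall x, nu (nu x) = x.
Hypothesis divisible : uniquely_2_divisible U.

Definition inverted (x : U) : Prop := nu x = x^-1.

Lemma nuM (x y : U) : nu (x * y) = nu x * nu y.
Proof. apply (proj1 nu_aut). Qed.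

Lemma nu1 : nu (gone U) = gone U.
Proof. apply (mulg_cancel_l (nu (gone U))). rewrite <- nuM, !gmul1r. reflexivity. Qed.

Lemma nuV (x : U) : nu x^-1 = (nu x)^-1.
Proof. apply invg_unique. rewrite <- nuM, gmulVr. exact nu1. Qed.

Lemma inverted_fixed_decomposition (x : U) :
  exists c, nu c = c /\ inverted (x * c^-1).
Proof.
  destruct (divisible (x * (nu x)^-1)) as [i [Ei _]].
  assert (i_inverted : inverted i).
  { assert (E : (nu i)^-1 = i).
    { apply (square_inj divisible). rewrite <- invgM, <- nuM, Ei, nuM, nuV, nuK.
      rewrite invgM, invgK. reflexivity. }
    unfold inverted. rewrite <- (invgK (nu i)), E. reflexivity. }
  exists (i^-1 * x). split.
  - rewrite nuM, nuV, i_inverted, invgK. apply (mulg_cancel_l i).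
    rewrite (gmulA U i i), Ei, mulgVK, gmulA, gmulVr, gmul1l. reflexivity.
  - rewrite invgM, invgK, gmulA, gmulVr, gmul1l. exact i_inverted.
Qed.

Lemma inverted_fixed_relation (a b c : U) :
  inverted a -> inverted b -> nu c = c -> inverted (a * b * c^-1) ->
  a * b = c * b * a * c.
Proof.
  unfold inverted. intros Ea Eb Ec E.
  rewrite !nuM, nuV, Ec, Ea, Eb, !invgM, invgK in E.
  assert (E' : (a^-1 * b^-1 * c^-1)^-1 = (c * (b^-1 * a^-1))^-1) by (rewrite E; reflexivity).
  rewrite !invgM, !invgK in E'.
  apply (mulg_cancel_r c^-1). rewrite <- (gmulA U (c * b * a)), gmulVr, gmul1r.
  rewrite <- !gmulA, E', !gmulA. reflexivity.
Qed.

Lemma commute_inverted_square (b c d : U) :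
  inverted b -> nu c = c -> inverted d -> commute d (c * b) -> commute d b.
Proof.
  unfold inverted. intros Eb Ec Ed E.
  assert (E_nu : commute d (c * b^-1)).
  { assert (F : nu (d * (c * b)) = nu (c * b * d)) by (rewrite E; reflexivity).
    rewrite !nuM, Ed, Ec, Eb in F.
    rewrite <- (invgK d). apply commute_invl. exact F. }
  apply (commute_of_square divisible).
  assert (Eb2 : b * b = (c * b^-1)^-1 * (c * b)).
  { rewrite invgM, invgK, <- gmulA, mulKg. reflexivity. }
  rewrite Eb2. destruct (commute_subgroup d) as [_ [CM CV]]. auto.
Qed.

Lemma centralizer_finite_index (H : U -> Prop) (b : U) :
  almost_regular nu -> abelian_inverted_subgroup nu H -> inverted b ->
  finite_index (fun x => H x /\ commute x b) H.
Proof.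
  intros [L fixedL] [[_ [HM HV]] [Hab Hinv]] Eb.
  apply (finite_index_of_labels L (fun x c => nu c = c /\ inverted (x * b * c^-1))).
  - intros x _. destruct (inverted_fixed_decomposition (x * b)) as [c [Ec Ei]].
    exists c. split; [apply fixedL, Ec | auto].
  - intros x y c Hx Hy [Ec Ex] [_ Ey]. split; [auto|].
    rewrite (Hab _ _ (HV _ Hy) Hx).
    apply (commute_inverted_square b c (x * y^-1) Eb Ec); [apply Hinv; auto|].
    apply (commute_shared_relation y).
    + apply inverted_fixed_relation; [apply Hinv | ..]; auto.
    + rewrite mulgVK. apply inverted_fixed_relation; [apply Hinv | ..]; auto.
Qed.

Lemma centralizer_in_abelian_inverted (H S : U -> Prop) :
  abelian_inverted_subgroup nu H -> abelian_inverted_subgroup nu (centralizer_in H S).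
Proof.
  intros [HH [Hab Hinv]]. split; [apply centralizer_in_subgroup, HH|].
  split; [intros x y [Hx _] [Hy _]; auto | intros x [Hx _]; auto].
Qed.

Lemma centralizer_list_finite_index (H : U -> Prop) (l : list U) :
  almost_regular nu -> abelian_inverted_subgroup nu H ->
  (forall b, In b l -> inverted b) ->
  finite_index (centralizer_in H (fun b => In b l)) H.
Proof.
  intros regular HH. induction l as [|b l IH]; intros l_inverted.
  - apply (finite_index_mono H); [intros x Hx; split; [exact Hx | intros s []]|].
    apply finite_index_refl, HH.
  - pose proof (centralizer_in_abelian_inverted H (fun b' => In b' l) HH) as centralizer_inverted.
    apply (finite_index_trans _ (centralizer_in H (fun b' => In b' l)));
      [apply HH | intros x [Hx _]; exact Hx | | apply IH; intros; auto with datatypes].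
    apply (finite_index_mono (fun x => centralizer_in H (fun b' => In b' l) x /\ commute x b)).
    + intros x [[Hx Cx] Cb]. split; [exact Hx|]. intros s [<- | ls]; auto.
    + apply centralizer_finite_index; auto with datatypes.
Qed.

End Involution.

Theorem lemma3p2 (U : Group) (nu : U -> U) (A B : U -> Prop) :
  infinite_group U ->
  uniquely_2_divisible U ->
  automorphism nu -> involutory nu -> almost_regular nu ->
  maximal_abelian_inverted nu A -> infinite_set A ->
  subgroup B -> abelian B -> inverted_by nu B -> finitely_generated B ->
  exists A1 : U -> Prop,
    subgroup A1 /\ subset A1 A /\ finite_index A1 A /\
    abelian (gen (union2 A1 B)).
Proof.
  intros _ divisible nu_aut [_ nuK] regular [A_inv _] _ _ Bab Binv [l Bl].
  assert (l_in_B : forall b, In b l -> B b).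
  { intros b lb. apply Bl. intros G _ lG. exact (lG b lb). }
  exists (centralizer_in A B). split; [|split; [|split]].
  - apply centralizer_in_subgroup, A_inv.
  - intros x [Ax _]. exact Ax.
  - apply (finite_index_mono (centralizer_in A (fun b => In b l))).
    + intros x Cx. destruct (centralizer_in_gen _ _ x Cx) as [Ax Cgen].
      split; [exact Ax|]. intros b Bb. apply Cgen, Bl, Bb.
    + apply (centralizer_list_finite_index nu nu_aut nuK divisible A l regular A_inv).
      intros b lb. apply Binv, l_in_B, lb.
  - apply gen_abelian. destruct A_inv as [_ [Aab _]].
    intros x y [[Ax Cx] | Bx] [[Ay Cy] | By].
    + auto.
    + apply Cx, By.
    + apply commute_sym, Cy, Bx.
    + auto.
Qed.
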